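(* Let $k,d\in\mathbb{N}$ with $0<k<d$, let $\mathcal{H}\in\bar{\mathbb{Q}}\cap[1,\infty)$, let $K$ be the normal closure of $\mathbb{Q}(\mathcal{H}^d)$, and let $\alpha\in A(k,d,\mathcal{H})$. Then $[K(\alpha):K]$ divides $\gcd(k,d)$. Furthermore, if $\alpha_1,\dots,\alpha_d$ are the conjugates of $\alpha$, numbered so that $|\alpha_i|\ge1$ if and only if $1\le i\le d-k$, then every $\sigma\in\mathrm{Gal}(\bar{\mathbb{Q}}/\mathbb{Q})$ with $\sigma(\mathcal{H}^d)=\mathcal{H}^d$ satisfies $\sigma(\{\alpha_1,\dots,\alpha_{d-k}\})=\{\alpha_1,\dots,\alpha_{d-k}\}$.
   Context: $\bar{\mathbb{Q}}$ is the algebraic closure of $\mathbb{Q}$ in $\mathbb{C}$. For algebraic $\alpha$ of degree $d$, with $a_0>0$ the leading coefficient of a minimal polynomial of $\alpha$ in $\mathbb{Z}[t]$ and conjugates $\alpha_1,\dots,\alpha_d$, $H(\alpha)=\big(a_0\prod_i\max\{1,|\alpha_i|\}\big)^{1/d}$ (absolute multiplicative Weil height). $A(k,d,\mathcal{H})=\{\alpha\in\mathbb{C}: [\mathbb{Q}(\alpha):\mathbb{Q}]=d,\ H(\alpha)=\mathcal{H},$ precisely $k$ conjugates of $\alpha$ in the open unit disk$\}$. *)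

(* algebraic numbers are modelled by mathcomp's algC
   (the algebraic closure of Q with complex conjugation, norm and the
   partial order of C), i.e. \bar{Q} inside C. *)
From HB Require Import structures.
From mathcomp Require Import all_boot all_order all_algebra all_field.
Set Implicit Arguments. Unset Strict Implicit. Unset Printing Implicit Defensive.
Import Order.TTheory GRing.Theory Num.Theory.
Local Open Scope ring_scope.

Definition alg_deg (a : algC) : nat := (size (minCpoly a)).-1.

(* the conjugates a_1,...,a_d of a : the roots of its minimal polynomial *)
Definition conjugates (a : algC) : seq algC :=
  sval (closed_field_poly_normal (minCpoly a)).

(* p is "the" minimal polynomial of a in Z[t] with positive leading
   coefficient: primitive (content 1, which also forces lead_coef p > 0,
   since zcontents carries the sign of the leading coefficient) and
   proportional to the monic minimal polynomial of a over Q. *)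
Definition is_Zminpoly (a : algC) (p : {poly int}) : Prop :=
  zcontents p = 1 /\ map_poly intr p = (lead_coef p)%:~R *: minCpoly a.

Definition weil_height (a h : algC) : Prop :=
  exists p : {poly int}, is_Zminpoly a p /\
    h = (alg_deg a).-root
          ((lead_coef p)%:~R * \prod_(z <- conjugates a) Num.max 1 `|z|).

Definition in_A (k d : nat) (H a : algC) : Prop :=
  alg_deg a = d /\ weil_height a H /\
  count (fun z : algC => `|z| < 1) (conjugates a) = k.

Definition is_subfield (S : algC -> Prop) : Prop :=
  S 0 /\ S 1 /\ (forall x y, S x -> S y -> S (x - y)) /\
  (forall x y, S x -> S y -> S (x * y)) /\ (forall x, S x -> S x^-1).

Definition normal_closure (b : algC) : algC -> Prop :=
  fun x => forall S : algC -> Prop, is_subfield S ->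
    (forall z, root (minCpoly b) z -> S z) -> S x.

Definition degree_over (K : algC -> Prop) (a : algC) (n : nat) : Prop :=
  (exists p : {poly algC}, p \is monic /\ (forall i, K p`_i) /\
      root p a /\ size p = n.+1) /\
  (forall p : {poly algC}, p != 0 -> (forall i, K p`_i) -> root p a ->
      (n.+1 <= size p)%N).

(* Write c = H^d and G for the automorphisms of algC fixing every conjugate
   of c (i.e. Gal(algC/K)).
   The theorem follows: n divides d and d - k (the large conjugates form a
   G-stable set), hence gcd(k,d); and when the conjugates are listed with
   the large ones first, the first d - k of them are exactly the large
   ones, which step 2 shows are permuted by any sg fixing c. *)
From HB Require Import structures.
From mathcomp Require Import all_boot all_order all_algebra all_field.
From Stdlib Require Import ClassicalEpsilon.
Import Order.TTheory GRing.Theory Num.Theory.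
Local Open Scope ring_scope.
Set Implicit Arguments. Unset Strict Implicit.

(* Boolean reflection of an arbitrary proposition, used to filter conjugates
   along a relation defined by quantifying over automorphisms. *)
Definition asbool (P : Prop) : bool :=
  if excluded_middle_informative P then true else false.

Lemma asboolP (P : Prop) : reflect P (asbool P).
Proof. by rewrite /asbool; case: excluded_middle_informative; constructor. Qed.

Lemma stable_map_perm (T : eqType) (f : T -> T) (r : seq T) :
  injective f -> uniq r -> {subset map f r <= r} -> perm_eq (map f r) r.
Proof.
move=> inj_f uniq_r sub_r.
have uniq_fr : uniq (map f r) by rewrite map_inj_uniq.
have [_ eq_fr] := uniq_min_size uniq_fr sub_r (eq_leq (esym (size_map _ _))).
exact: uniq_perm.
Qed.

Section SubfieldClosure.
Variable S : algC -> Prop.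
Hypothesis subfield_S : is_subfield S.

Lemma subf0 : S 0. Proof. by case: subfield_S. Qed.
Lemma subf1 : S 1. Proof. by case: subfield_S => _ []. Qed.
Lemma subfB x y : S x -> S y -> S (x - y).
Proof. by case: subfield_S => _ [_ [subB _]]; apply: subB. Qed.
Lemma subfM x y : S x -> S y -> S (x * y).
Proof. by case: subfield_S => _ [_ [_ [subM _]]]; apply: subM. Qed.
Lemma subfV x : S x -> S x^-1.
Proof. by case: subfield_S => _ [_ [_ [_ subV]]]; apply: subV. Qed.

Lemma subfN x : S x -> S (- x).
Proof. by move=> Sx; rewrite -sub0r; apply: subfB => //; apply: subf0. Qed.

Lemma subfD x y : S x -> S y -> S (x + y).
Proof. by move=> Sx Sy; rewrite -[y]opprK; apply: subfB => //; apply: subfN. Qed.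

Lemma subfX x n : S x -> S (x ^+ n).
Proof.
move=> Sx; elim: n => [|n IHn]; first by rewrite expr0; apply: subf1.
by rewrite exprS; apply: subfM.
Qed.

Lemma subf_int (z : int) : S z%:~R.
Proof.
have subf_nat n : S n%:R.
  elim: n => [|n IHn]; first exact: subf0.
  by rewrite -natr1; apply: subfD => //; apply: subf1.
by case: z => n; [|rewrite NegzE rmorphN; apply: subfN]; apply: subf_nat.
Qed.

Lemma subf_rat (r : rat) : S (ratr r).
Proof. by apply: subfM; [|apply: subfV]; apply: subf_int. Qed.

Lemma subf_horner (p : {poly algC}) x :
  (forall i, S p`_i) -> S x -> S p.[x].
Proof.
move=> Sp Sx; rewrite horner_coef.
elim: (index_enum _) => [|i r IHr]; first by rewrite big_nil; apply: subf0.
by rewrite big_cons; apply: subfD => //; apply: subfM => //; apply: subfX.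
Qed.

End SubfieldClosure.

Lemma map_minCpoly (sg : {rmorphism algC -> algC}) x :
  map_poly sg (minCpoly x) = minCpoly x.
Proof.
have [q [-> _] _] := minCpolyP x.
by rewrite -map_poly_comp; apply: eq_map_poly => r /=; rewrite fmorph_rat.
Qed.

Lemma root_minCpoly_aut (sg : {rmorphism algC -> algC}) x z :
  root (minCpoly x) z -> root (minCpoly x) (sg z).
Proof. by rewrite -{2}(map_minCpoly sg x) fmorph_root. Qed.

Lemma mem_roots_aut (sg : {rmorphism algC -> algC}) a (s : seq algC) z :
  minCpoly a = \prod_(w <- s) ('X - w%:P) -> z \in s -> sg z \in s.
Proof. by move=> Ds; rewrite -!root_prod_XsubC -Ds; apply: root_minCpoly_aut. Qed.

Lemma conjugatesE a : minCpoly a = \prod_(z <- conjugates a) ('X - z%:P).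
Proof.
rewrite /conjugates; case: closed_field_poly_normal => r /= {1}->.
by rewrite (monicP (minCpoly_monic a)) scale1r.
Qed.

Lemma map_poly_in_alg (L : fieldExtType rat) (LC : {rmorphism L -> algC})
    (q : {poly rat}) :
  map_poly LC (map_poly (in_alg L) q) = map_poly ratr q.
Proof.
rewrite -map_poly_comp; apply: eq_map_poly => r /=.
by rewrite alg_num_field fmorph_rat.
Qed.

Lemma num_field_char0 (L : fieldExtType rat) : has_pchar0 L.
Proof. by move=> p; rewrite pchar_lalg; apply: pchar_num. Qed.

(* A splitting field L over Q is Galois over each of its subfields E (it is
   normal, and separable since it has characteristic 0). *)
Lemma galois_full (L : splittingFieldType rat) (E : {subfield L}) :
  galois E fullv.
Proof.
rewrite /galois subvf normalFieldf andbT.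
by apply/separableP => y _; apply: (pcharf0_separable _ (@num_field_char0 L)).
Qed.

Lemma num_splitting_field (r : seq algC) (q : {poly rat}) :
  map_poly ratr q = \prod_(z <- r) ('X - z%:P) ->
  exists L : splittingFieldType rat, exists LC : {rmorphism L -> algC},
  exists rr : seq L, map LC rr = r.
Proof.
move=> Dq; have [Qs [QsC [rs Drs gen_rs]]] := num_field_exists r.
have Qs_splits : splitting_field_axiom Qs.
  exists (map_poly (in_alg Qs) q); first by apply/polyOver1P; exists q.
  exists rs; last exact: gen_rs.
  suff -> : map_poly (in_alg Qs) q = \prod_(z <- rs) ('X - z%:P) by apply: eqpxx.
  apply: (@map_poly_inj _ _ QsC); rewrite map_poly_in_alg Dq rmorph_prod -Drs.
  by rewrite big_map; apply: eq_bigr => z _ /=; rewrite map_polyXsubC.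
pose L : splittingFieldType rat :=
  HB.pack_for (splittingFieldType rat) Qs
    (FieldExt_isSplittingField.Build rat Qs Qs_splits).
by exists L, QsC, rs.
Qed.

Lemma splitting_field_of_conjugates (xs : seq algC) :
  exists L : splittingFieldType rat, exists LC : {rmorphism L -> algC},
  exists rr : seq L, forall x z, x \in xs -> root (minCpoly x) z ->
    exists2 z', z' \in rr & LC z' = z.
Proof.
have [q Dq] : exists q : {poly rat},
    map_poly ratr q = \prod_(x <- xs) minCpoly x.
  elim: xs => [|x xs [q Dq]]; first by exists 1; rewrite rmorph1 big_nil.
  have [qx [Dqx _] _] := minCpolyP x.
  by exists (qx * q); rewrite rmorphM /= -Dqx Dq big_cons.
have [r Dr] := closed_field_poly_normal (\prod_(x <- xs) minCpoly x).
have mon : \prod_(x <- xs) minCpoly x \is monic.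
  by apply: monic_prod => x _; apply: minCpoly_monic.
rewrite (monicP mon) scale1r in Dr.
have [L [LC [rr Drr]]] := num_splitting_field (etrans Dq Dr).
exists L, LC, rr => x z xs_x rz.
have : z \in r by rewrite -root_prod_XsubC -Dr (big_rem x) //= rootM rz.
by rewrite -Drr => /mapP[z' rr_z' ->]; exists z'.
Qed.

Lemma map_minPoly (L : splittingFieldType rat) (LC : {rmorphism L -> algC})
    (x : L) :
  map_poly LC (minPoly 1%AS x) = minCpoly (LC x).
Proof.
have [q [Dq mon_q] min_q] := minCpolyP (LC x).
have /polyOver1P[q' Dq'] := minPolyOver 1%AS x.
rewrite Dq' map_poly_in_alg Dq; congr (map_poly ratr _).
have mon_q' : q' \is monic by rewrite -(map_monic (in_alg L)) -Dq' monic_minPoly.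
apply/eqP; rewrite -eqp_monic //; apply/andP; split.
  rewrite -(dvdp_map (in_alg L)) -Dq'; apply: minPoly_dvdp.
    by apply/polyOver1P; exists q.
  by rewrite -(fmorph_root LC) map_poly_in_alg -Dq root_minCpoly.
by rewrite -min_q -(map_poly_in_alg LC) -Dq' fmorph_root root_minPoly.
Qed.

Lemma minCpoly_uniq_roots a (s : seq algC) :
  minCpoly a = \prod_(z <- s) ('X - z%:P) -> uniq s.
Proof.
move=> Ds; have [L [LC [rr inL]]] := splitting_field_of_conjugates [:: a].
have [a' _ Da] := inL a a (mem_head _ _) (root_minCpoly a).
rewrite -separable_prod_XsubC -Ds -Da -(map_minPoly LC a') separable_map.
exact: (pcharf0_separable 1%AS (@num_field_char0 L)).
Qed.

Lemma aut_transitive x y :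
  root (minCpoly x) y -> exists sg : {rmorphism algC -> algC}, sg x = y.
Proof.
move=> ry; have [L [LC [rr inL]]] := splitting_field_of_conjugates [:: x].
have [x' _ Dx] := inL x x (mem_head _ _) (root_minCpoly x).
have [y' _ Dy] := inL x y (mem_head _ _) ry.
have ry' : root (minPoly 1%AS x') y'.
  by rewrite -(fmorph_root LC) map_minPoly Dx Dy.
have [phi _ phi_x] :=
  normalField_root_minPoly (sub1v _) (normalFieldf 1%AS) (memvf x') ry'.
have [nu Dnu] :=
  @extend_algC_subfield_aut L LC ((phi : 'AEnd(L)) : {rmorphism L -> L}).
by exists nu; rewrite -Dx -Dnu /= phi_x Dy.
Qed.

(* The automorphisms fixing every conjugate of c, i.e. Gal(algC / K) where
   K is the normal closure of Q(c). *)
Definition fixes_conj (c : algC) (sg : {rmorphism algC -> algC}) : Prop :=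
  forall z, root (minCpoly c) z -> sg z = z.

Lemma normal_closure_subfield c : is_subfield (normal_closure c).
Proof.
split; first by move=> S SS _; apply: subf0.
split; first by move=> S SS _; apply: subf1.
split; first by move=> x y Kx Ky S SS Sc; apply: subfB (Kx S SS Sc) (Ky S SS Sc).
split; first by move=> x y Kx Ky S SS Sc; apply: subfM (Kx S SS Sc) (Ky S SS Sc).
by move=> x Kx S SS Sc; apply: subfV (Kx S SS Sc).
Qed.

Lemma normal_closure_fixed c (sg : {rmorphism algC -> algC}) x :
  fixes_conj c sg -> normal_closure c x -> sg x = x.
Proof.
move=> fix_sg /(_ (fun y => sg y = y)); apply => //.
split; first exact: rmorph0.
split; first exact: rmorph1.
split; first by move=> y z sy sz; rewrite rmorphB sy sz.
split; first by move=> y z sy sz; rewrite rmorphM sy sz.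
by move=> y sy; rewrite fmorphV sy.
Qed.

Lemma adjoin_subfield_image (L : fieldExtType rat) (LC : {rmorphism L -> algC})
    (S : algC -> Prop) (l : seq L) :
  is_subfield S -> (forall y, y \in l -> S (LC y)) ->
  forall y, y \in <<1%AS & l>>%VS -> S (LC y).
Proof.
move=> subfield_S; elim/last_ind: l => [|l z IHl] Sl y.
  rewrite Fadjoin_nil => /vlineP[r ->].
  by rewrite rmorphZ_num rmorph1 mulr1; apply: subf_rat.
rewrite adjoin_rcons => y_in.
rewrite -(Fadjoin_poly_eq y_in) -horner_map; apply: subf_horner => //.
  move=> i; rewrite coef_map /=; apply: IHl.
    by move=> w l_w; apply: Sl; rewrite mem_rcons in_cons l_w orbT.
  exact: (polyOverP (Fadjoin_polyOver _ _ _)).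
by apply: Sl; rewrite mem_rcons mem_head.
Qed.

(* Galois correspondence for K: what Gal(algC / K) fixes lies in K. *)
Lemma fixed_in_normal_closure c x :
  (forall sg, fixes_conj c sg -> sg x = x) -> normal_closure c x.
Proof.
move=> fix_x; have [L [LC [rr inL]]] := splitting_field_of_conjugates [:: c; x].
have [x' _ Dx] := inL x x (mem_last c [:: x]) (root_minCpoly x).
pose E := <<1%AS & [seq y <- rr | root (minCpoly c) (LC y)]>>%AS.
have : x' \in fixedField ('Gal(fullv / E))%g.
  apply/fixedFieldP; first exact: memvf.
  move=> phi phi_G.
  have [nu Dnu] :=
    @extend_algC_subfield_aut L LC ((phi : 'AEnd(L)) : {rmorphism L -> L}).
  have fix_nu : fixes_conj c nu.
    move=> z rz; have [z' rr_z' Dz] := inL c z (mem_head _ _) rz.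
    rewrite -Dz -Dnu /=; congr (LC _); apply: (fixed_gal (subvf E) phi_G).
    by apply: seqv_sub_adjoin; rewrite mem_filter Dz rz rr_z'.
  by apply: (fmorph_inj LC); rewrite Dnu /= Dx fix_x.
rewrite (galois_fixedField (galois_full E)) -Dx => E_x'.
apply: (adjoin_subfield_image (normal_closure_subfield c) _ E_x').
by move=> y; rewrite mem_filter => /andP[ry _] S _ Sc; apply: Sc.
Qed.

Lemma weil_height_pow a H :
  weil_height a H -> exists2 lc : int, lc != 0 &
    H ^+ alg_deg a = lc%:~R * \prod_(z <- conjugates a) Num.max 1 `|z|.
Proof.
case=> p [[cont_p _] DH]; exists (lead_coef p).
  by rewrite -sgz_eq0 -sgz_contents cont_p.
by rewrite DH rootCK // ltn_predRL size_minCpoly.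
Qed.

Definition large (s : seq algC) : seq algC := [seq z <- s | 1 <= `|z|].

Lemma small_normE (z : algC) : (`|z| < 1) = ~~ (1 <= `|z|).
Proof. by rewrite real_ltNge ?real1 ?normr_real. Qed.

Lemma size_large (s : seq algC) :
  size (large s) + count (fun z => `|z| < 1) s = size s.
Proof.
rewrite size_filter -(count_predC (fun z => 1 <= `|z|) s).
by congr (_ + _); apply: eq_count => z; rewrite /= small_normE.
Qed.

Lemma prod_max1_large (s : seq algC) :
  \prod_(z <- s) Num.max 1 `|z| = \prod_(z <- large s) `|z|.
Proof.
rewrite big_filter (bigID (fun z => 1 <= `|z|)) /= [X in _ * X]big1 ?mulr1.
  by apply: eq_bigr => z /max_r.
by move=> z z_small; rewrite max_l // ltW // small_normE.
Qed.

Lemma prodr_ge1 (I : Type) (r : seq I) (P : pred I) (F : I -> algC) :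
  (forall i, P i -> 1 <= F i) -> 1 <= \prod_(i <- r | P i) F i.
Proof. by move=> F_ge1; apply: (big_ind (>= 1)) => //; apply: mulr_ege1. Qed.

Lemma prod_norm_lt_large (s U : seq algC) :
  uniq s -> uniq U -> {subset U <= s} -> (exists2 w, w \in U & `|w| < 1) ->
  \prod_(w <- U) `|w| < \prod_(w <- large s) `|w|.
Proof.
move=> uniq_s uniq_U sub_Us [w0 U_w0 small_w0].
rewrite (bigID (fun w => 1 <= `|w|)) /=.
set A := \prod_(w <- U | 1 <= `|w|) `|w|.
set B := \prod_(w <- U | ~~ (1 <= `|w|)) `|w|.
have A_ge1 : 1 <= A by apply: prodr_ge1.
have A_le : A <= \prod_(w <- large s) `|w|.
  (* split prod_(large s) into the factors in U, whose product is A, and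
     the others, which are at least 1 *)
  rewrite [X in _ <= X](bigID (mem U)) /=.
  have -> : \prod_(w <- large s | w \in U) `|w| = A.
    rewrite -[LHS]big_filter -[RHS]big_filter; apply: perm_big.
    apply: uniq_perm; rewrite ?filter_uniq // => w; rewrite !mem_filter.
    by case U_w: (w \in U); rewrite ?andbF //= (sub_Us _ U_w) andbT.
  apply: ler_peMr; first exact: le_trans A_ge1.
  by rewrite big_filter_cond; apply: prodr_ge1 => w /andP[].
have B_lt1 : B < 1.
  rewrite /B -big_filter (bigD1_seq w0) /=; last by rewrite filter_uniq.
    apply: le_lt_trans small_w0; apply: ler_piMr; first exact: normr_ge0.
    rewrite big_seq_cond; apply: prodr_ile1 => w /andP[].
    by rewrite mem_filter -small_normE normr_ge0 => /andP[/ltW].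
  by rewrite mem_filter U_w0 -small_normE small_w0.
by apply: lt_le_trans A_le; rewrite gtr_pMr // (lt_le_trans ltr01).
Qed.

(* The product of the large conjugates is real: complex conjugation
   permutes them. *)
Lemma prod_large_real a (s : seq algC) :
  minCpoly a = \prod_(z <- s) ('X - z%:P) -> \prod_(z <- large s) z \is Num.real.
Proof.
move=> Ds; rewrite CrealE rmorph_prod -(big_map (fun w => w^*) xpredT id).
apply/eqP/perm_big/stable_map_perm.
- exact: (fmorph_inj Num.conj).
- by rewrite filter_uniq // (minCpoly_uniq_roots Ds).
move=> _ /mapP[z + ->]; rewrite !mem_filter norm_conjC => /andP[z_ge1 s_z].
by rewrite z_ge1 (mem_roots_aut Num.conj Ds s_z).
Qed.

Lemma aut_prod_large a (s : seq algC) (lc : int) (sg : {rmorphism algC -> algC}) :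
  minCpoly a = \prod_(z <- s) ('X - z%:P) -> lc != 0 ->
  sg (lc%:~R * \prod_(z <- s) Num.max 1 `|z|) =
    lc%:~R * \prod_(z <- s) Num.max 1 `|z| ->
  \prod_(w <- map sg (large s)) `|w| = \prod_(w <- large s) `|w|.
Proof.
move=> Ds lc_neq0; rewrite prod_max1_large -normr_prod.
set P := \prod_(w <- large s) w.
rewrite {1}(real_normrEsign (prod_large_real Ds)) => /(congr1 Num.norm).
rewrite rmorphM rmorph_int rmorphM rmorph_sign !normrM normr_sign mul1r normr_id.
rewrite /P rmorph_prod normr_prod big_map normr_prod; apply: mulfI.
by rewrite normr_eq0 intr_eq0.
Qed.

Lemma aut_large a (s : seq algC) (lc : int) (sg : {rmorphism algC -> algC}) :
  minCpoly a = \prod_(z <- s) ('X - z%:P) -> lc != 0 ->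
  sg (lc%:~R * \prod_(z <- s) Num.max 1 `|z|) =
    lc%:~R * \prod_(z <- s) Num.max 1 `|z| ->
  perm_eq (map sg (large s)) (large s).
Proof.
move=> Ds lc_neq0 sg_c; have uniq_s := minCpoly_uniq_roots Ds.
apply: stable_map_perm; rewrite ?filter_uniq //; first exact: fmorph_inj.
move=> _ /mapP[z large_z ->]; move: (large_z); rewrite !mem_filter.
case/andP=> _ s_z; rewrite (mem_roots_aut sg Ds s_z) andbT.
apply: contraT; rewrite -small_normE => small_sgz.
have := prod_norm_lt_large (U := map sg (large s)) uniq_s.
rewrite (aut_prod_large Ds lc_neq0 sg_c) ltxx; apply => //.
- by rewrite map_inj_uniq ?filter_uniq //; apply: fmorph_inj.
- move=> _ /mapP[w + ->]; rewrite mem_filter => /andP[_ s_w].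
  exact: mem_roots_aut Ds s_w.
by exists (sg z); first exact: map_f.
Qed.

Definition conj_over (c x y : algC) : Prop :=
  exists2 sg : {rmorphism algC -> algC}, fixes_conj c sg & sg x = y.

Definition conj_orbit (c : algC) (s : seq algC) (x : algC) : seq algC :=
  [seq y <- s | asbool (conj_over c x y)].

(* Gal(algC / K) is a group, normal in Aut(algC) since K is a normal
   extension of Q. *)
Lemma fixes_conj_comp c (sg tau : {rmorphism algC -> algC}) :
  fixes_conj c sg -> fixes_conj c tau -> fixes_conj c (sg \o tau).
Proof. by move=> fix_sg fix_tau z rz /=; rewrite fix_tau // fix_sg. Qed.

Lemma fixes_conj_inv c (sg : {rmorphism algC -> algC}) :
  fixes_conj c sg -> fixes_conj c (algC_invaut sg).
Proof.
by move=> fix_sg z rz; apply: (fmorph_inj sg); rewrite algC_invautK fix_sg.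
Qed.

Lemma fixes_conj_conjg c (tau sg : {rmorphism algC -> algC}) :
  fixes_conj c sg -> fixes_conj c (tau \o sg \o algC_invaut tau).
Proof.
move=> fix_sg z rz /=; rewrite fix_sg ?algC_invautK //.
exact: root_minCpoly_aut.
Qed.

Lemma conj_over_refl c x : conj_over c x x.
Proof. by exists idfun. Qed.

Lemma conj_over_sym c x y : conj_over c x y -> conj_over c y x.
Proof.
case=> sg fix_sg <-; exists (algC_invaut sg); last exact: algC_autK.
exact: fixes_conj_inv.
Qed.

Lemma conj_over_trans c x y z :
  conj_over c x y -> conj_over c y z -> conj_over c x z.
Proof.
case=> sg fix_sg <- [tau fix_tau <-]; exists (tau \o sg) => //.
exact: fixes_conj_comp.
Qed.

Section Orbits.
Variables (c a : algC) (s : seq algC).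
Hypothesis Ds : minCpoly a = \prod_(z <- s) ('X - z%:P).

Lemma conj_orbit_uniq x : uniq (conj_orbit c s x).
Proof. by rewrite filter_uniq // (minCpoly_uniq_roots Ds). Qed.

Lemma mem_conj_orbit_self : a \in conj_orbit c s a.
Proof.
rewrite mem_filter -root_prod_XsubC -Ds root_minCpoly andbT.
exact/asboolP/conj_over_refl.
Qed.

Lemma map_conj_orbit (sg : {rmorphism algC -> algC}) :
  fixes_conj c sg -> perm_eq (map sg (conj_orbit c s a)) (conj_orbit c s a).
Proof.
move=> fix_sg; apply: (stable_map_perm (fmorph_inj sg) (conj_orbit_uniq a)).
move=> _ /mapP[y + ->]; rewrite !mem_filter => /andP[/asboolP a_y s_y].
rewrite (mem_roots_aut sg Ds s_y) andbT; apply/asboolP.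
by apply: conj_over_trans a_y _; exists sg.
Qed.

(* Any automorphism tau maps the orbit of x into the orbit of tau x, since
   it normalises Gal(algC / K). *)
Lemma size_conj_orbit_aut (tau : {rmorphism algC -> algC}) x :
  (size (conj_orbit c s x) <= size (conj_orbit c s (tau x)))%N.
Proof.
rewrite -(size_map tau); apply: uniq_leq_size.
  by rewrite map_inj_uniq ?conj_orbit_uniq //; apply: fmorph_inj.
move=> _ /mapP[y + ->]; rewrite !mem_filter => /andP[/asboolP[sg fix_sg <-] s_y].
rewrite (mem_roots_aut tau Ds s_y) andbT; apply/asboolP.
exists (tau \o sg \o algC_invaut tau); first exact: fixes_conj_conjg.
by rewrite /= algC_autK.
Qed.

Lemma size_conj_orbit b :
  b \in s -> size (conj_orbit c s b) = size (conj_orbit c s a).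
Proof.
rewrite -root_prod_XsubC -Ds => /aut_transitive[tau <-].
apply/eqP; rewrite eqn_leq size_conj_orbit_aut.
by rewrite -{2}(algC_autK tau a) size_conj_orbit_aut.
Qed.

(* Hence the orbit size divides the size of any Gal(algC / K)-stable set of
   conjugates: such a set is a disjoint union of orbits. *)
Lemma size_conj_orbit_dvd_count (P : pred algC) :
  (forall x y, x \in s -> P x -> conj_over c x y -> P y) ->
  (size (conj_orbit c s a) %| count P s)%N.
Proof.
(* Induction on a bound m for count P s: if some b in s satisfies P, the
   orbit of b lies in P, and P minus that orbit is again stable. *)
move: {2}(count P s) (leqnn (count P s)) => m.
elim: m P => [|m IHm] P le_Pm stable_P.
  by move: le_Pm; rewrite leqn0 => /eqP ->; apply: dvdn0.
have [/hasP[b s_b Pb]|] := boolP (has P s); last first.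
  by rewrite has_count -leqNgt leqn0 => /eqP ->; apply: dvdn0.
pose Ob := fun y => asbool (conj_over c b y).
have count_split :
    count P s = count (predI Ob P) s + count (predI (predC Ob) P) s.
  by rewrite -size_filter -(count_predC Ob) !count_filter.
have count_Ob : count (predI Ob P) s = size (conj_orbit c s a).
  rewrite -(size_conj_orbit s_b) size_filter; apply: eq_in_count => y s_y.
  by rewrite /= /Ob; case: asboolP => //= b_y; apply: (stable_P b).
have orbit_pos : (0 < size (conj_orbit c s a))%N.
  by have := mem_conj_orbit_self; case: (conj_orbit c s a).
rewrite count_split count_Ob dvdn_addr //; apply: IHm.
  move: le_Pm; rewrite count_split count_Ob => le_Pm.
  by rewrite -ltnS (leq_trans _ le_Pm) // -add1n leq_add2r.
move=> x y s_x /andP[not_b_x Px] x_y; rewrite /= (stable_P x y) // andbT.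
apply: contra not_b_x => /asboolP b_y; apply/asboolP.
exact: conj_over_trans b_y (conj_over_sym x_y).
Qed.

(* The orbit polynomial prod_(y in orbit of a) (X - y) has coefficients in
   K (they are fixed by Gal(algC / K)) and divides every polynomial over K
   vanishing at a (its roots are Gal(algC / K)-conjugates of a): it is the
   minimal polynomial of a over K. *)
Lemma degree_over_conj_orbit :
  degree_over (normal_closure c) a (size (conj_orbit c s a)).
Proof.
split.
  exists (\prod_(y <- conj_orbit c s a) ('X - y%:P)).
  split; first exact: monic_prod_XsubC.
  split.
    move=> i; apply: fixed_in_normal_closure => sg fix_sg; rewrite -coef_map.
    suff -> : map_poly sg (\prod_(y <- conj_orbit c s a) ('X - y%:P)) =
              \prod_(y <- map sg (conj_orbit c s a)) ('X - y%:P).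
      by rewrite (perm_big _ (map_conj_orbit fix_sg)).
    rewrite big_map rmorph_prod; apply: eq_bigr => y _ /=.
    exact: map_polyXsubC.
  split; first by rewrite root_prod_XsubC mem_conj_orbit_self.
  exact: size_prod_XsubC.
move=> p p_neq0 Kp pa.
have roots_p : all (root p) (conj_orbit c s a).
  apply/allP => y; rewrite mem_filter => /andP[/asboolP[sg fix_sg <-] _].
  have map_p : map_poly sg p = p.
    by apply/polyP => i; rewrite coef_map /= (normal_closure_fixed fix_sg (Kp i)).
  by rewrite -map_p fmorph_root.
have := uniq_roots_dvdp roots_p; rewrite uniq_rootsE conj_orbit_uniq.
by move=> /(_ isT)/(dvdp_leq p_neq0); rewrite size_prod_XsubC.
Qed.

End Orbits.

Lemma take_filter_prefix (T : Type) (x0 : T) (P : pred T) (t : seq T) m :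
  (forall i, (i < size t)%N -> P (nth x0 t i) = (i < m)%N) ->
  take m t = filter P t.
Proof.
move=> P_prefix; rewrite -[in RHS](cat_take_drop m t) filter_cat.
have /all_filterP -> : all P (take m t).
  apply/(all_nthP x0) => i; rewrite size_take_min leq_min => /andP[i_m i_t].
  by rewrite nth_take // P_prefix.
suff -> : filter P (drop m t) = [::] by rewrite cats0.
apply/nilP; rewrite /nilp size_filter eqn0Ngt -has_count.
apply/negP => /(has_nthP x0)[i].
by rewrite size_drop nth_drop ltn_subRL => /P_prefix ->; rewrite ltnNge leq_addr.
Qed.

Unset Implicit Arguments. Set Strict Implicit.

Theorem lemma5p1 (k d : nat) (H a : algC) :
  (0 < k)%N -> (k < d)%N -> 1 <= H -> in_A k d H a ->
  (exists n : nat,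
      degree_over (normal_closure (H ^+ d)) a n /\ (n %| gcdn k d)%N) /\
  (forall s : seq algC,
      minCpoly a = \prod_(z <- s) ('X - z%:P) ->
      (forall i : nat, (i < d)%N -> (1 <= `|s`_i|) = (i < d - k)%N) ->
      forall sigma : {rmorphism algC -> algC},
        sigma (H ^+ d) = H ^+ d ->
        [seq sigma z | z <- take (d - k) s] =i take (d - k) s).
Proof.
move=> _ lt_kd _ [deg_a [/weil_height_pow[lc lc_neq0 Dc] count_small]].
rewrite deg_a in Dc; set c := H ^+ d in Dc *.
set s := conjugates a; have Ds := conjugatesE a.
have size_s : size s = d by move: deg_a; rewrite /alg_deg Ds size_prod_XsubC.
have large_stable t (sg : {rmorphism algC -> algC}) :
    minCpoly a = \prod_(z <- t) ('X - z%:P) -> sg c = c ->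
    perm_eq (map sg (large t)) (large t).
  move=> Dt; have perm_st : perm_eq s t by apply: prod_XsubC_eq; rewrite -Ds.
  by rewrite Dc (perm_big _ perm_st); apply: (aut_large Dt lc_neq0).
split.
  pose n := size (conj_orbit c s a); exists n.
  split; first exact: degree_over_conj_orbit Ds.
  have n_d : (n %| d)%N.
    by rewrite -size_s -count_predT; apply: (size_conj_orbit_dvd_count Ds).
  have n_dk : (n %| d - k)%N.
    rewrite -size_s -(size_large s) count_small addnK size_filter.
    apply: (size_conj_orbit_dvd_count Ds) => x y s_x x_ge1 [sg fix_sg <-].
    have sg_c : sg c = c by apply: fix_sg; apply: root_minCpoly.
    have /perm_mem/(_ (sg x)) := large_stable s sg Ds sg_c.
    by rewrite map_f ?mem_filter ?x_ge1 ?s_x // => /esym/andP[].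
  by rewrite dvdn_gcd n_d -(subKn (ltnW lt_kd)) dvdn_sub.
move=> t Dt order_t sg sg_c.
have size_t : size t = d.
  by rewrite -size_s; apply/perm_size/prod_XsubC_eq; rewrite -Ds.
have -> : take (d - k) t = large t.
  by apply: take_filter_prefix => i; rewrite size_t; apply: order_t.
exact/perm_mem/large_stable.
Qed.
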